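(* Let $(B,D,d,\theta)$ be a regular E-system, $\mathcal A=\mathcal A_{B\to D}$ its associated Ann-category, $Q$ a ring, and $(F,\breve F,\widetilde F):\mathrm{Dis}\,Q\to\mathcal A$ an Ann-functor. Let $\psi:Q\to\operatorname{Coker}d$ be the ring homomorphism $u\mapsto$ (class of $F(u)$ in $D/\operatorname{Im}d$). Then there exists a ring extension of $B$ by $Q$ of type $B\to D$ inducing $\psi$.
   Context: Bimultiplications of a ring $A$ form the ring $M_A$; $\mu_c$ is the inner bimultiplication $a\mapsto ca$, $a\mapsto ac$; two bimultiplications $\sigma,\tau$ are permutable if $\sigma(a\tau)=(\sigma a)\tau$, $\tau(a\sigma)=(\tau a)\sigma$ for all $a$. E-system $(B,D,d,\theta)$: $B$ a ring, $D$ a unital ring, $d:B\to D$, $\theta:D\to M_B$ ring homomorphisms with $\theta d=\mu$, $d(\theta_xb)=x\,d(b)$, $d(b\theta_x)=d(b)x$; regular if $\theta(1)=1$ and elements of $\theta(D)$ are pairwise permutable. Morphism of E-systems $(f_1,f_0)$: ring homomorphisms with $f_0d=d'f_1$, $f_1(\theta_xb)=\theta'_{f_0(x)}f_1(b)$, $f_1(b\theta_x)=f_1(b)\theta'_{f_0(x)}$. Associated Ann-category $\mathcal A_{B\to D}$: objects elements of $D$, morphisms $x\to y$ the $b\in B$ with $y=d(b)+x$, composition by addition, $\oplus,\otimes$ given by $+,\cdot$ on objects and by $b+b'$, $bb'+b\theta_{x'}+\theta_xb'$ on morphisms $x\xrightarrow{b}y$, $x'\xrightarrow{b'}y'$, all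 constraints identities. $\mathrm{Dis}\,Q$ is the strict Ann-category with objects the elements of $Q$, only identity morphisms, $\oplus,\otimes$ the ring operations. An Ann-functor is a functor with natural isomorphisms $\breve F:F(X\oplus Y)\to FX\oplus FY$, $\widetilde F:F(X\otimes Y)\to FX\otimes FY$ making it symmetric monoidal for $\oplus$, monoidal for $\otimes$, compatible with distributivity constraints. A ring extension of $B$ by $Q$ of type $B\to D$ is an exact sequence of ring homomorphisms $0\to B\xrightarrow{j}E\xrightarrow{p}Q\to0$ together with a ring homomorphism $\varepsilon:E\to D$ such that $(B,E,j,\theta')$ is an E-system with $\theta'$ of bimultiplication type ($\theta'_e b=eb$, $b\theta'_e=be$ computed in $E$, $B$ identified with $j(B)$) and $(\mathrm{id}_B,\varepsilon)$ is a morphism of E-systems $(B,E,j,\theta')\to(B,D,d,\theta)$. It induces the unique ring homomorphism $\psi:Q\to\operatorname{Coker}d$ with $\psi\circ p=q\circ\varepsilon$, $q:D\to\operatorname{Coker}d=D/\operatorname{Im}d$ the projection. *)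

(* Non-unital ring B = zmodType + explicit multiplication;
   unital rings D, Q, E = pzRingType (unital, 1 = 0 allowed). *)
From HB Require Import structures.
From mathcomp Require Import all_boot all_algebra.
Set Implicit Arguments. Unset Strict Implicit. Unset Printing Implicit Defensive.
Import GRing.Theory.
Local Open Scope ring_scope.

Definition nuring_axioms (B : zmodType) (mulB : B -> B -> B) : Prop :=
  (forall a b c, mulB a (mulB b c) = mulB (mulB a b) c) /\
  (forall a b c, mulB a (b + c) = mulB a b + mulB a c) /\
  (forall a b c, mulB (a + b) c = mulB a c + mulB b c).

Definition additive_map (U V : zmodType) (f : U -> V) : Prop :=
  forall a b, f (a + b) = f a + f b.

(* ring homomorphism from the (non-unital) ring (B,mulB) to a ring D
   (no unit condition: homomorphisms need not preserve 1) *)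
Definition nuring_hom (B : zmodType) (mulB : B -> B -> B) (D : pzRingType)
  (f : B -> D) : Prop :=
  additive_map f /\ forall a b, f (mulB a b) = f a * f b.

Definition ring_hom (R S : pzRingType) (f : R -> S) : Prop :=
  additive_map f /\ forall a b, f (a * b) = f a * f b.

(* (sl, sr) is a bimultiplication of B: sl a = "sigma a", sr a = "a sigma" *)
Definition is_bimult (B : zmodType) (mulB : B -> B -> B) (sl sr : B -> B) : Prop :=
  additive_map sl /\ additive_map sr /\
  (forall a b, sl (mulB a b) = mulB (sl a) b) /\
  (forall a b, sr (mulB a b) = mulB a (sr b)) /\
  (forall a b, mulB a (sl b) = mulB (sr a) b).

(* theta : D -> M_B is a ring homomorphism, theta_x = (thl x, thr x);
   product in M_B : (st) a = s (t a),  a (st) = (a s) t *)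
Definition theta_hom (B : zmodType) (mulB : B -> B -> B) (D : pzRingType)
  (thl thr : D -> B -> B) : Prop :=
  (forall x, is_bimult mulB (thl x) (thr x)) /\
  (forall x y a, thl (x + y) a = thl x a + thl y a) /\
  (forall x y a, thr (x + y) a = thr x a + thr y a) /\
  (forall x y a, thl (x * y) a = thl x (thl y a)) /\
  (forall x y a, thr (x * y) a = thr y (thr x a)).

Definition E_system (B : zmodType) (mulB : B -> B -> B) (D : pzRingType)
  (d : B -> D) (thl thr : D -> B -> B) : Prop :=
  nuring_axioms mulB /\
  nuring_hom mulB d /\
  theta_hom mulB thl thr /\
  (forall c a, thl (d c) a = mulB c a /\ thr (d c) a = mulB a c) /\
  (forall x b, d (thl x b) = x * d b) /\
  (forall x b, d (thr x b) = d b * x).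

Definition regular_E_system (B : zmodType) (mulB : B -> B -> B) (D : pzRingType)
  (d : B -> D) (thl thr : D -> B -> B) : Prop :=
  E_system mulB d thl thr /\
  (forall a, thl 1 a = a /\ thr 1 a = a) /\
  (forall x y a, thl x (thr y a) = thr y (thl x a) /\
                 thl y (thr x a) = thr x (thl y a)).

Definition Esys_morphism (B : zmodType) (mulB : B -> B -> B) (D : pzRingType)
  (d : B -> D) (thl thr : D -> B -> B)
  (B' : zmodType) (mulB' : B' -> B' -> B') (D' : pzRingType)
  (d' : B' -> D') (thl' thr' : D' -> B' -> B')
  (f1 : B -> B') (f0 : D -> D') : Prop :=
  (forall a b, f1 (a + b) = f1 a + f1 b) /\
  (forall a b, f1 (mulB a b) = mulB' (f1 a) (f1 b)) /\
  ring_hom f0 /\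
  (forall b, f0 (d b) = d' (f1 b)) /\
  (forall x b, f1 (thl x b) = thl' (f0 x) (f1 b)) /\
  (forall x b, f1 (thr x b) = thr' (f0 x) (f1 b)).

(* Ann-functor (F, Fs = F-breve, Fp = F-tilde) : Dis Q -> A_{B->D}.
   A morphism x -> y of A is b with y = d b + x; composition is +,
   identities are 0; (b (x->y)) (x) (b' (x'->y')) = b b' + b theta_x' + theta_x b';
   all constraints are identities in both categories.  Naturality is
   automatic since Dis Q has only identity morphisms. *)
Definition ann_functor (B : zmodType) (mulB : B -> B -> B) (D : pzRingType)
  (d : B -> D) (thl thr : D -> B -> B) (Q : pzRingType)
  (F : Q -> D) (Fs Fp : Q -> Q -> B) : Prop :=
  (* Fs u v : F(u+v) -> F u + F v,  Fp u v : F(uv) -> F u F v *)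
  (forall u v, F u + F v = d (Fs u v) + F (u + v)) /\
  (forall u v, F u * F v = d (Fp u v) + F (u * v)) /\
  (forall u v w, Fs u (v + w) + Fs v w = Fs (u + v) w + Fs u v) /\
  (forall u v, Fs u v = Fs v u) /\
  (* compatibility with unit constraints of (+) : unit iso c : F 0 -> 0 *)
  (exists c, 0 = d c + F 0 /\ (forall u, Fs 0 u + c = 0) /\ (forall u, Fs u 0 + c = 0)) /\
  (forall u v w, Fp u (v * w) + thl (F u) (Fp v w) = Fp (u * v) w + thr (F w) (Fp u v)) /\
  (* compatibility with unit constraints of (x) : unit iso c : F 1 -> 1 *)
  (exists c, 1 = d c + F 1 /\
     (forall u, Fp 1 u + thr (F u) c = 0) /\ (forall u, Fp u 1 + thl (F u) c = 0)) /\
  (forall u v w, Fp u (v + w) + thl (F u) (Fs v w) = Fs (u * v) (u * w) + (Fp u v + Fp u w)) /\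
  (forall u v w, Fp (u + v) w + thr (F w) (Fs u v) = Fs (u * w) (v * w) + (Fp u w + Fp v w)).

Definition ring_extension_of_type (B : zmodType) (mulB : B -> B -> B) (D : pzRingType)
  (d : B -> D) (thl thr : D -> B -> B) (Q E : pzRingType)
  (j : B -> E) (p : E -> Q) (eps : E -> D) : Prop :=
  nuring_hom mulB j /\ ring_hom p /\ ring_hom eps /\
  injective j /\ (forall q, exists e, p e = q) /\
  (forall e, p e = 0 <-> exists b, e = j b) /\
  exists thl' thr' : E -> B -> B,
    (forall e b, j (thl' e b) = e * j b /\ j (thr' e b) = j b * e) /\
    E_system mulB j thl' thr' /\
    Esys_morphism mulB j thl' thr' mulB d thl thr id eps.

(* Given a regular E-system (B, D, d, theta) and an Ann-functor
   (F, Fs, Fp) : Dis Q -> A_{B->D}, the data (Fs, Fp) behave like a factor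
   set, and the ring extension is the crossed product E = B x Q with
     (a, u) + (b, v) = (a + b + Fs u v, u + v),
     (a, u) * (b, v) = (a b + a theta_(F v) + theta_(F u) b + Fp u v, u v).
   Its zero and unit are (c0, 0) and (c1, 1), where c0 : F 0 -> 0 and
   c1 : F 1 -> 1 are the unit isomorphisms of F.  The ring axioms of E are
   the compatibilities of F with the associativity, commutativity, unit and
   distributivity constraints.  The maps are j b = (b + c0, 0),
   p (a, u) = u and eps (a, u) = d a + F u; eps is a ring homomorphism
   because F u + F v and F u F v differ from F (u + v), F (u v) by the
   images under d of Fs u v, Fp u v.  Finally E acts on j(B) through
   theta o eps, and any ring containing B as an ideal in this way is an
   E-system of bimultiplication type (lemma [bimult_type_E_system]). *)

From HB Require Import structures.
From mathcomp Require Import all_boot all_algebra.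
Set Implicit Arguments. Unset Strict Implicit. Unset Printing Implicit Defensive.
Import GRing.Theory.
Local Open Scope ring_scope.

(* Tactic [zmod_eq] closes an equation in a zmodType whose two sides are
   equal as formal sums of signed atoms: it moves everything to the left
   and cancels every summand against an occurrence of its opposite. *)
Lemma zmod_pull_head (V : zmodType) (a r : V) : a + r = a + r.
Proof. by []. Qed.
Lemma zmod_pull_last (V : zmodType) (a : V) : a = a + 0.
Proof. by rewrite addr0. Qed.
Lemma zmod_pull_later (V : zmodType) (a y t r : V) :
  t = a + r -> y + t = a + (y + r).
Proof. by move=> ->; rewrite addrCA. Qed.
Lemma zmod_cancel_pos (V : zmodType) (x s r : V) : s = - x + r -> r = 0 -> x + s = 0.
Proof. by move=> -> ->; rewrite addr0 subrr. Qed.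
Lemma zmod_cancel_neg (V : zmodType) (x s r : V) : s = x + r -> r = 0 -> - x + s = 0.
Proof. by move=> -> ->; rewrite addr0 addNr. Qed.

Ltac zmod_pull :=
  first [ exact: zmod_pull_head | exact: zmod_pull_last
        | eapply zmod_pull_later; zmod_pull ].
Ltac zmod_cancel :=
  lazymatch goal with
  | |- 0 = 0 => reflexivity
  | |- - ?x + _ = 0 => eapply (@zmod_cancel_neg _ x); [zmod_pull | zmod_cancel]
  | |- ?x + _ = 0 => eapply (@zmod_cancel_pos _ x); [zmod_pull | zmod_cancel]
  end.
Ltac zmod_eq :=
  apply: subr0_eq; rewrite ?opprD ?opprK -?addrA ?addr0 ?add0r ?oppr0 ?addr0;
  zmod_cancel.

Lemma additive_map0N (U V : zmodType) (f : U -> V) :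
  additive_map f -> f 0 = 0 /\ forall a, f (- a) = - f a.
Proof.
move=> f_add; have f0 : f 0 = 0 by apply: (@addrI _ (f 0)); rewrite -f_add !addr0.
split=> // a; apply/eqP; rewrite -addr_eq0 -f_add.
by rewrite addNr f0.
Qed.

Lemma bimult_type_E_system (B : zmodType) (mulB : B -> B -> B) (E : pzRingType)
    (j : B -> E) (thl thr : E -> B -> B) :
  nuring_hom mulB j -> injective j ->
  (forall e b, j (thl e b) = e * j b /\ j (thr e b) = j b * e) ->
  E_system mulB j thl thr.
Proof.
move=> [jD jM] jI jth.
have jthl e b : j (thl e b) = e * j b by case: (jth e b).
have jthr e b : j (thr e b) = j b * e by case: (jth e b).
split.
  split; first by move=> a b c; apply: jI; rewrite !jM mulrA.
  by split=> a b c; apply: jI; rewrite !(jD, jM) ?mulrDl ?mulrDr.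
split; first by split.
split.
  split.
    move=> x; split; [|split; [|split; [|split]]] => a b; apply: jI.
    - by rewrite jD !jthl jD mulrDr.
    - by rewrite jD !jthr jD mulrDl.
    - by rewrite jM !jthl jM mulrA.
    - by rewrite jM !jthr jM mulrA.
    - by rewrite !jM jthl jthr mulrA.
  split; first by move=> x y a; apply: jI; rewrite jD !jthl mulrDl.
  split; first by move=> x y a; apply: jI; rewrite jD !jthr mulrDr.
  split; first by move=> x y a; apply: jI; rewrite !jthl mulrA.
  by move=> x y a; apply: jI; rewrite !jthr mulrA.
split; first by move=> c a; split; apply: jI; rewrite ?jthl ?jthr jM.
by split=> [x b | x b]; rewrite ?jthl ?jthr.
Qed.

Section CrossedProduct.

Variables (B : zmodType) (mulB : B -> B -> B) (D : pzRingType)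
  (d : B -> D) (thl thr : D -> B -> B) (Q : pzRingType)
  (F : Q -> D) (Fs Fp : Q -> Q -> B) (c0 c1 : B).

Hypothesis mulBA : forall a b c, mulB a (mulB b c) = mulB (mulB a b) c.
Hypothesis mulBDr : forall a b c, mulB a (b + c) = mulB a b + mulB a c.
Hypothesis mulBDl : forall a b c, mulB (a + b) c = mulB a c + mulB b c.
Hypothesis d_add : additive_map d.
Hypothesis d_mul : forall a b, d (mulB a b) = d a * d b.
Hypothesis thlDr : forall x a b, thl x (a + b) = thl x a + thl x b.
Hypothesis thrDr : forall x a b, thr x (a + b) = thr x a + thr x b.
Hypothesis thlMr : forall x a b, thl x (mulB a b) = mulB (thl x a) b.
Hypothesis thrMr : forall x a b, thr x (mulB a b) = mulB a (thr x b).
Hypothesis mulB_thl : forall x a b, mulB a (thl x b) = mulB (thr x a) b.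
Hypothesis thlDl : forall x y a, thl (x + y) a = thl x a + thl y a.
Hypothesis thrDl : forall x y a, thr (x + y) a = thr x a + thr y a.
Hypothesis thlM : forall x y a, thl (x * y) a = thl x (thl y a).
Hypothesis thrM : forall x y a, thr (x * y) a = thr y (thr x a).
Hypothesis thl_d : forall c a, thl (d c) a = mulB c a.
Hypothesis thr_d : forall c a, thr (d c) a = mulB a c.
Hypothesis d_thl : forall x b, d (thl x b) = x * d b.
Hypothesis d_thr : forall x b, d (thr x b) = d b * x.
Hypothesis thl1 : forall a, thl 1 a = a.
Hypothesis thr1 : forall a, thr 1 a = a.
Hypothesis thl_thr : forall x y a, thl x (thr y a) = thr y (thl x a).

Hypothesis Fs_def : forall u v, F u + F v = d (Fs u v) + F (u + v).
Hypothesis Fp_def : forall u v, F u * F v = d (Fp u v) + F (u * v).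
Hypothesis Fs_assoc : forall u v w, Fs u (v + w) + Fs v w = Fs (u + v) w + Fs u v.
Hypothesis Fs_comm : forall u v, Fs u v = Fs v u.
Hypothesis c0_def : 0 = d c0 + F 0.
Hypothesis Fs_unitl : forall u, Fs 0 u + c0 = 0.
Hypothesis Fp_assoc : forall u v w,
  Fp u (v * w) + thl (F u) (Fp v w) = Fp (u * v) w + thr (F w) (Fp u v).
Hypothesis c1_def : 1 = d c1 + F 1.
Hypothesis Fp_unitl : forall u, Fp 1 u + thr (F u) c1 = 0.
Hypothesis Fp_unitr : forall u, Fp u 1 + thl (F u) c1 = 0.
Hypothesis Fp_distl : forall u v w,
  Fp u (v + w) + thl (F u) (Fs v w) = Fs (u * v) (u * w) + (Fp u v + Fp u w).
Hypothesis Fp_distr : forall u v w,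
  Fp (u + v) w + thr (F w) (Fs u v) = Fs (u * w) (v * w) + (Fp u w + Fp v w).

Lemma mulNB a b : mulB (- a) b = - mulB a b.
Proof. exact: (additive_map0N (fun a a' => mulBDl a a' b)).2. Qed.
Lemma mulBN a b : mulB a (- b) = - mulB a b.
Proof. exact: (additive_map0N (mulBDr a)).2. Qed.
Lemma thlNr x a : thl x (- a) = - thl x a.
Proof. exact: (additive_map0N (thlDr x)).2. Qed.
Lemma thrNr x a : thr x (- a) = - thr x a.
Proof. exact: (additive_map0N (thrDr x)).2. Qed.
Lemma thlNl x a : thl (- x) a = - thl x a.
Proof. exact: (additive_map0N (fun x y => thlDl x y a)).2. Qed.
Lemma thrNl x a : thr (- x) a = - thr x a.
Proof. exact: (additive_map0N (fun x y => thrDl x y a)).2. Qed.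

Definition expandE := (mulBDr, mulBDl, mulNB, mulBN, thlDr, thrDr, thlNr, thrNr,
  thlDl, thrDl, thlNl, thrNl, thl_d, thr_d, thlM, thrM, thl1, thr1,
  mulBA, thlMr, thrMr, mulB_thl, thl_thr).

Lemma F_add u v : F (u + v) = F u + F v - d (Fs u v).
Proof. by rewrite Fs_def addrAC subrr add0r. Qed.
Lemma F_mul u v : F (u * v) = F u * F v - d (Fp u v).
Proof. by rewrite Fp_def addrAC subrr add0r. Qed.
Lemma F_zero : F 0 = - d c0.
Proof. by apply/eqP; rewrite -addr_eq0 addrC -c0_def. Qed.
Lemma F_one : F 1 = 1 - d c1.
Proof. by rewrite {1}c1_def addrAC subrr add0r. Qed.
Lemma Fs_0l u : Fs 0 u = - c0.
Proof. by rewrite (canRL (addrK c0) (Fs_unitl u)) add0r. Qed.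
Lemma Fp_1l u : Fp 1 u = - thr (F u) c1.
Proof. by rewrite (canRL (addrK _) (Fp_unitl u)) add0r. Qed.
Lemma Fp_1r u : Fp u 1 = - thl (F u) c1.
Proof. by rewrite (canRL (addrK _) (Fp_unitr u)) add0r. Qed.
Lemma Fs_addr u v w : Fs u (v + w) = Fs (u + v) w + Fs u v - Fs v w.
Proof. exact: canRL (addrK _) (Fs_assoc u v w). Qed.
Lemma Fp_mulr u v w :
  Fp u (v * w) = Fp (u * v) w + thr (F w) (Fp u v) - thl (F u) (Fp v w).
Proof. exact: canRL (addrK _) (Fp_assoc u v w). Qed.
Lemma Fp_addr u v w :
  Fp u (v + w) = Fs (u * v) (u * w) + (Fp u v + Fp u w) - thl (F u) (Fs v w).
Proof. exact: canRL (addrK _) (Fp_distl u v w). Qed.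
Lemma Fp_addl u v w :
  Fp (u + v) w = Fs (u * w) (v * w) + (Fp u w + Fp v w) - thr (F w) (Fs u v).
Proof. exact: canRL (addrK _) (Fp_distr u v w). Qed.

(* Distributivity at 0 determines the multiplicative constraint there. *)
Lemma Fp_0r u : Fp u 0 = c0 - thl (F u) c0.
Proof.
have := Fp_distl u 0 0; rewrite !addr0 !mulr0 Fs_0l thlNr => dist0.
apply: (@addrI _ (Fp u 0)).
rewrite (_ : Fp u 0 + Fp u 0 = - c0 + (Fp u 0 + Fp u 0) + c0); last by zmod_eq.
by rewrite -dist0; zmod_eq.
Qed.
Lemma Fp_0l u : Fp 0 u = c0 - thr (F u) c0.
Proof.
have := Fp_distr 0 0 u; rewrite !addr0 !mul0r Fs_0l thrNr => dist0.
apply: (@addrI _ (Fp 0 u)).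
rewrite (_ : Fp 0 u + Fp 0 u = - c0 + (Fp 0 u + Fp 0 u) + c0); last by zmod_eq.
by rewrite -dist0; zmod_eq.
Qed.

Definition ext := (B * Q)%type.
HB.instance Definition _ := Choice.on ext.

Definition ext_add (x y : ext) : ext := (x.1 + y.1 + Fs x.2 y.2, x.2 + y.2).
Definition ext_zero : ext := (c0, 0).
Definition ext_opp (x : ext) : ext := (c0 - x.1 - Fs x.2 (- x.2), - x.2).

Lemma ext_addA : associative ext_add.
Proof.
move=> [a u] [b v] [c w]; rewrite /ext_add /=.
by congr pair; [rewrite Fs_addr; zmod_eq | rewrite addrA].
Qed.
Lemma ext_addC : commutative ext_add.
Proof. by move=> [a u] [b v]; rewrite /ext_add /= Fs_comm (addrC a) (addrC u). Qed.
Lemma ext_add0 : left_id ext_zero ext_add.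
Proof. by move=> [a u]; rewrite /ext_add /= Fs_0l add0r; congr pair; zmod_eq. Qed.
Lemma ext_addN : left_inverse ext_zero ext_opp ext_add.
Proof. by move=> [a u]; rewrite /ext_add /= addNr (Fs_comm (- u)); congr pair; zmod_eq. Qed.

HB.instance Definition _ := GRing.isZmodule.Build ext ext_addA ext_addC ext_add0 ext_addN.

Definition ext_mul (x y : ext) : ext :=
  (mulB x.1 y.1 + thr (F y.2) x.1 + thl (F x.2) y.1 + Fp x.2 y.2, x.2 * y.2).
Definition ext_one : ext := (c1, 1).

Lemma ext_mulA : associative ext_mul.
Proof.
move=> [a u] [b v] [c w]; rewrite /ext_mul /=.
by congr pair; [rewrite !F_mul Fp_mulr !expandE; zmod_eq | rewrite mulrA].
Qed.
Lemma ext_mul1 : left_id ext_one ext_mul.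
Proof.
move=> [a u]; rewrite /ext_mul /= F_one Fp_1l mul1r !expandE.
by congr pair; zmod_eq.
Qed.
Lemma ext_mulr1 : right_id ext_one ext_mul.
Proof.
move=> [a u]; rewrite /ext_mul /= F_one Fp_1r mulr1 !expandE.
by congr pair; zmod_eq.
Qed.
Lemma ext_mulDl : left_distributive ext_mul ext_add.
Proof.
move=> [a u] [b v] [c w]; rewrite /ext_mul /ext_add /=.
by congr pair; [rewrite F_add Fp_addl !expandE; zmod_eq | rewrite mulrDl].
Qed.
Lemma ext_mulDr : right_distributive ext_mul ext_add.
Proof.
move=> [a u] [b v] [c w]; rewrite /ext_mul /ext_add /=.
by congr pair; [rewrite F_add Fp_addr !expandE; zmod_eq | rewrite mulrDr].
Qed.

HB.instance Definition _ :=
  GRing.Zmodule_isPzRing.Build ext ext_mulA ext_mul1 ext_mulr1 ext_mulDl ext_mulDr.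

Lemma ext_addE (x y : ext) : x + y = ext_add x y. Proof. by []. Qed.
Lemma ext_mulE (x y : ext) : x * y = ext_mul x y. Proof. by []. Qed.

Definition ext_j (b : B) : ext := (b + c0, 0).
Definition ext_p (x : ext) : Q := x.2.
Definition ext_eps (x : ext) : D := d x.1 + F x.2.

Lemma ext_j_hom : nuring_hom mulB ext_j.
Proof.
split=> [a b | a b].
  by rewrite ext_addE /ext_j /ext_add /= Fs_0l addr0; congr pair; zmod_eq.
rewrite ext_mulE /ext_j /ext_mul /= Fp_0l F_zero mulr0 !expandE.
by congr pair; zmod_eq.
Qed.

Lemma ext_j_inj : injective ext_j.
Proof. by move=> a b [] /addIr. Qed.

Lemma ext_kernel (e : ext) : ext_p e = 0 <-> exists b, e = ext_j b.
Proof.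
split=> [|[b ->] //]; case: e => a u /= ->.
by exists (a - c0); rewrite /ext_j subrK.
Qed.

Lemma ext_eps_hom : ring_hom ext_eps.
Proof.
split=> [[a u] [b v] | [a u] [b v]]; rewrite /ext_eps.
  by rewrite ext_addE /ext_add /= !d_add F_add; zmod_eq.
rewrite ext_mulE /ext_mul /= !d_add d_mul d_thr d_thl F_mul !(mulrDl, mulrDr).
zmod_eq.
Qed.

Lemma ext_eps_j b : ext_eps (ext_j b) = d b.
Proof. by rewrite /ext_eps /= F_zero d_add; zmod_eq. Qed.

Lemma ext_j_action e b : ext_j (thl (ext_eps e) b) = e * ext_j b.
Proof.
case: e => a u; rewrite ext_mulE /ext_j /ext_mul /ext_eps /= Fp_0r F_zero mulr0.
by rewrite !expandE; congr pair; zmod_eq.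
Qed.
Lemma ext_j_thr e b : ext_j (thr (ext_eps e) b) = ext_j b * e.
Proof.
case: e => a u; rewrite ext_mulE /ext_j /ext_mul /ext_eps /= Fp_0l F_zero mul0r.
by rewrite !expandE; congr pair; zmod_eq.
Qed.

(* The crossed product is a ring extension of B by Q of type B -> D, and it
   induces psi : the class of eps (a, u) modulo Im d is that of F u. *)
Lemma crossed_product_extension :
  exists (E : pzRingType) (j : B -> E) (p : E -> Q) (eps : E -> D),
    ring_extension_of_type mulB d thl thr j p eps /\
    forall e, exists b, eps e = d b + F (p e).
Proof.
exists ext, ext_j, ext_p, ext_eps; split; last by move=> e; exists e.1.
have j_action e b : ext_j (thl (ext_eps e) b) = e * ext_j b /\
                 ext_j (thr (ext_eps e) b) = ext_j b * e.
  by split; [exact: ext_j_action | exact: ext_j_thr].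
split; first exact: ext_j_hom.
split; first by [].
split; first exact: ext_eps_hom.
split; first exact: ext_j_inj.
split; first by move=> q; exists (0, q).
split; first exact: ext_kernel.
exists (fun e => thl (ext_eps e)), (fun e => thr (ext_eps e)).
split; first exact: j_action.
split; first exact: bimult_type_E_system ext_j_hom ext_j_inj j_action.
split; first by [].
split; first by [].
split; first exact: ext_eps_hom.
by split; first exact: ext_eps_j.
Qed.

End CrossedProduct.

Theorem mainTheorem7 (B : zmodType) (mulB : B -> B -> B) (D : pzRingType)
  (d : B -> D) (thl thr : D -> B -> B) (Q : pzRingType)
  (F : Q -> D) (Fs Fp : Q -> Q -> B) :
  regular_E_system mulB d thl thr ->
  ann_functor mulB d thl thr F Fs Fp ->
  exists (E : pzRingType) (j : B -> E) (p : E -> Q) (eps : E -> D),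
    ring_extension_of_type mulB d thl thr j p eps /\
    (* induces psi : u |-> class of F u in D / Im d, i.e. psi o p = q o eps *)
    (forall e, exists b, eps e = d b + F (p e)).
Proof.
move=> [[[mulBA [mulBDr mulBDl]] [[d_add d_mul] [[bimult [thlDl [thrDl [thlM thrM]]]]
         [theta_d [d_thl d_thr]]]]] [theta1 theta_comm]].
move=> [Fs_def [Fp_def [Fs_assoc [Fs_comm [[c0 [c0_def [Fs_unitl _]]]
         [Fp_assoc [[c1 [c1_def [Fp_unitl Fp_unitr]]] [Fp_distl Fp_distr]]]]]]]].
apply: (@crossed_product_extension B mulB D d thl thr Q F Fs Fp c0 c1) => //.
- by move=> x; case: (bimult x).
- by move=> x; case: (bimult x) => _ [].
- by move=> x; case: (bimult x) => _ [_ []].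
- by move=> x; case: (bimult x) => _ [_ [_ []]].
- by move=> x; case: (bimult x) => _ [_ [_ []]].
- by move=> c a; case: (theta_d c a).
- by move=> c a; case: (theta_d c a).
- by move=> a; case: (theta1 a).
- by move=> a; case: (theta1 a).
- by move=> x y a; case: (theta_comm x y a).
Qed.
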